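(* Let $\Sigma\subseteq\mathcal L_{\Diamond\forall}$ be finite and closed under subformulas, let $\Lambda={\sf ITL}^0_{\Diamond\forall}$, let $(W_c,\preccurlyeq_c,S_c)$ be the canonical model of $\Lambda$, and let $\Pi=(\Pi^+,\Pi^-)$ be a universal $\Sigma$-profile. Let $W_c[\Pi]=\{\Phi\in W_c:\Pi^+\subseteq\Phi^+\text{ and }\Pi^-\subseteq\Phi^-\}$. Then $W_c[\Pi]$ is upward closed under $\preccurlyeq_c$, and $W_c[\Pi]$ is honest as a $\Sigma$-labelled structure: for every $\Phi\in W_c[\Pi]$ and every $\forall\varphi\in\Sigma$, if $\forall\varphi\in\Phi^+$ then $\varphi\in\Psi^+$ for every $\Psi\in W_c[\Pi]$, and if $\forall\varphi\in\Phi^-$ then $\varphi\in\Psi^-$ for some $\Psi\in W_c[\Pi]$.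
   Context: $\mathcal L_{\Diamond\forall}$: formulas $\varphi::=\bot\mid p\mid\varphi\wedge\varphi\mid\varphi\vee\varphi\mid\varphi\to\varphi\mid\circ\varphi\mid\Diamond\varphi\mid\forall\varphi$; $\neg\varphi:=\varphi\to\bot$, $\varphi\leftrightarrow\psi:=(\varphi\to\psi)\wedge(\psi\to\varphi)$. ${\sf ITL}^0_{\Diamond\forall}$ is the least set of $\mathcal L_{\Diamond\forall}$-formulas containing all substitution instances of the intuitionistic propositional axioms and of $\neg\circ\bot$, $\circ\varphi\wedge\circ\psi\to\circ(\varphi\wedge\psi)$, $\circ(\varphi\vee\psi)\to\circ\varphi\vee\circ\psi$, $\circ(\varphi\to\psi)\to(\circ\varphi\to\circ\psi)$, $\varphi\vee\circ\Diamond\varphi\to\Diamond\varphi$, $\forall\varphi\vee\neg\forall\varphi$, $\forall(\varphi\to\psi)\to(\forall\varphi\to\forall\psi)$, $\forall(\varphi\vee\forall\psi)\to\forall\varphi\vee\forall\psi$, $\forall\varphi\to\varphi$, $\forall\varphi\to\forall\forall\varphi$, $\forall\varphi\leftrightarrow\circ\forall\varphi$, closed under modus ponens, from $\varphi$ infer $\circ\varphi$, from $\varphi\to\psi$ infer $\Diamond\varphi\to\Diamond\psi$, from $\circ\varphi\to\varphi$ infer $\Diamond\varphi\to\varphi$, and from $\varphi$ infer $\forall\varphi$. $\Gamma\vdash\Delta$ means there are finite $\Gamma'\subseteq\Gamma$, $\Delta'\subseteq\Delta$ with $\bigwedge\Gamma'\to\bigvee\Delta'\in\Lambda$. A prime type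 is a pair $(\Phi^+,\Phi^-)$ of sets of $\mathcal L_{\Diamond\forall}$-formulas with $\Phi^+\cup\Phi^-=\mathcal L_{\Diamond\forall}$ and $\Phi^+\not\vdash\Phi^-$. Canonical model: $W_c$ is the set of prime types; $\Phi\preccurlyeq_c\Psi$ iff $\Phi^+\subseteq\Psi^+$ and $\Psi^-\subseteq\Phi^-$; $\Phi\mathrel{S_c}\Psi$ iff $(\Phi,\Psi)$ is sensible ($\circ\varphi\in\Phi^\pm\Rightarrow\varphi\in\Psi^\pm$; $\Diamond\varphi\in\Phi^+\Rightarrow\varphi\in\Phi^+$ or $\Diamond\varphi\in\Psi^+$; $\Diamond\varphi\in\Phi^-\Rightarrow\Diamond\varphi\in\Psi^-$; $\forall\varphi\in\Phi^\pm\Leftrightarrow\forall\varphi\in\Psi^\pm$). $\Sigma_\forall$ denotes the set of formulas in $\Sigma$ of the form $\forall\varphi$; a universal $\Sigma$-profile is a partition $(\Pi^+,\Pi^-)$ of $\Sigma_\forall$. *)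

From Stdlib Require Import List.
Import ListNotations.

Inductive form : Type :=
| Bot : form
| Var : nat -> form
| And : form -> form -> form
| Or  : form -> form -> form
| Imp : form -> form -> form
| Next : form -> form
| Dia : form -> form
| All : form -> form.

Definition Neg (a : form) : form := Imp a Bot.
Definition Iff (a b : form) : form := And (Imp a b) (Imp b a).
Definition Top : form := Imp Bot Bot.

(* The intuitionistic propositional axioms are given
   by a standard Hilbert axiomatisation of IPC as schemata (every instance by
   arbitrary formulas), which is the same as all substitution instances. *)
Inductive prov : form -> Prop :=
| ax_k a b : prov (Imp a (Imp b a))
| ax_s a b c : prov (Imp (Imp a (Imp b c)) (Imp (Imp a b) (Imp a c)))
| ax_andl a b : prov (Imp (And a b) a)
| ax_andr a b : prov (Imp (And a b) b)
| ax_andi a b : prov (Imp a (Imp b (And a b)))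
| ax_orl a b : prov (Imp a (Or a b))
| ax_orr a b : prov (Imp b (Or a b))
| ax_ore a b c : prov (Imp (Imp a c) (Imp (Imp b c) (Imp (Or a b) c)))
| ax_efq a : prov (Imp Bot a)
| ax_nextbot : prov (Neg (Next Bot))
| ax_nextand a b : prov (Imp (And (Next a) (Next b)) (Next (And a b)))
| ax_nextor a b : prov (Imp (Next (Or a b)) (Or (Next a) (Next b)))
| ax_nextimp a b : prov (Imp (Next (Imp a b)) (Imp (Next a) (Next b)))
| ax_diafix a : prov (Imp (Or a (Next (Dia a))) (Dia a))
| ax_allem a : prov (Or (All a) (Neg (All a)))
| ax_allk a b : prov (Imp (All (Imp a b)) (Imp (All a) (All b)))
| ax_allor a b : prov (Imp (All (Or a (All b))) (Or (All a) (All b)))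
| ax_allt a : prov (Imp (All a) a)
| ax_all4 a : prov (Imp (All a) (All (All a)))
| ax_allnext a : prov (Iff (All a) (Next (All a)))
| r_mp a b : prov (Imp a b) -> prov a -> prov b
| r_nec a : prov a -> prov (Next a)
| r_diamon a b : prov (Imp a b) -> prov (Imp (Dia a) (Dia b))
| r_diaind a : prov (Imp (Next a) a) -> prov (Imp (Dia a) a)
| r_allnec a : prov a -> prov (All a).

Definition Lambda : form -> Prop := prov.

Definition fset := form -> Prop.

Fixpoint conjl (l : list form) : form :=
  match l with [] => Top | a :: l' => And a (conjl l') end.
Fixpoint disjl (l : list form) : form :=
  match l with [] => Bot | a :: l' => Or a (disjl l') end.

Definition entails (G D : fset) : Prop :=
  exists (G' D' : list form),
    (forall a, In a G' -> G a) /\ (forall a, In a D' -> D a) /\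
    Lambda (Imp (conjl G') (disjl D')).

(* types: pairs (Phi+, Phi-) *)
Definition ftype := (fset * fset)%type.

Definition prime_type (P : ftype) : Prop :=
  (forall a, fst P a \/ snd P a) /\ ~ entails (fst P) (snd P).

Definition Wc (P : ftype) : Prop := prime_type P.

Definition prec_c (P Q : ftype) : Prop :=
  (forall a, fst P a -> fst Q a) /\ (forall a, snd Q a -> snd P a).

Definition sensible (P Q : ftype) : Prop :=
  (forall a, fst P (Next a) -> fst Q a) /\
  (forall a, snd P (Next a) -> snd Q a) /\
  (forall a, fst P (Dia a) -> fst P a \/ fst Q (Dia a)) /\
  (forall a, snd P (Dia a) -> snd Q (Dia a)) /\
  (forall a, fst P (All a) <-> fst Q (All a)) /\
  (forall a, snd P (All a) <-> snd Q (All a)).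

Definition S_c (P Q : ftype) : Prop := sensible P Q.

Definition subformula_closed (S : list form) : Prop :=
  (forall a b, In (And a b) S -> In a S /\ In b S) /\
  (forall a b, In (Or a b) S -> In a S /\ In b S) /\
  (forall a b, In (Imp a b) S -> In a S /\ In b S) /\
  (forall a, In (Next a) S -> In a S) /\
  (forall a, In (Dia a) S -> In a S) /\
  (forall a, In (All a) S -> In a S).

Definition is_all (a : form) : Prop := exists b, a = All b.
Definition Sigma_all (S : list form) (a : form) : Prop := In a S /\ is_all a.

Definition universal_profile (S : list form) (Pi : ftype) : Prop :=
  (forall a, fst Pi a \/ snd Pi a <-> Sigma_all S a) /\
  (forall a, ~ (fst Pi a /\ snd Pi a)).

Definition Wc_Pi (Pi : ftype) (P : ftype) : Prop :=
  Wc P /\ (forall a, fst Pi a -> fst P a) /\ (forall a, snd Pi a -> snd P a).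

From Stdlib Require Import List ClassicalEpsilon Cantor PeanoNat.
Import ListNotations.

(* A prime type lies in W_c[Pi] exactly when its positive part contains the
   theory Pi+ u {~ All b : All b in Pi-}, because All b \/ ~ All b is provable;
   upward closure is immediate from this.  Every member of that theory implies
   its own universal closure (All b -> All All b, and ~ All b -> All ~ All b via
   ax_allor), so a derivation of a from it lifts to a derivation of All a.
   Hence if All a is negative in some member of W_c[Pi], the theory does not
   derive a, and Lindenbaum's lemma yields a member of W_c[Pi] refuting a.
   The positive half of honesty is All a -> a, All a being forced into Pi+. *)

Lemma prov_imp_refl a : prov (Imp a a).
Proof. exact (r_mp _ _ (r_mp _ _ (ax_s a (Imp a a) a) (ax_k a (Imp a a))) (ax_k a a)). Qed.

Inductive derives (G : list form) : form -> Prop :=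
| derives_hyp a : In a G -> derives G a
| derives_prov a : prov a -> derives G a
| derives_mp a b : derives G (Imp a b) -> derives G a -> derives G b.
Arguments derives_hyp {G a}.
Arguments derives_prov {G a}.
Arguments derives_mp {G a b}.

Lemma derives_deduction G a b : derives (a :: G) b -> derives G (Imp a b).
Proof.
  induction 1 as [b [<- | Hb] | b Hb | b c _ IH1 _ IH2].
  - exact (derives_prov (prov_imp_refl a)).
  - exact (derives_mp (derives_prov (ax_k _ _)) (derives_hyp Hb)).
  - exact (derives_mp (derives_prov (ax_k _ _)) (derives_prov Hb)).
  - exact (derives_mp (derives_mp (derives_prov (ax_s _ _ _)) IH1) IH2).
Qed.

Lemma derives_subst G H a :
  derives G a -> (forall g, In g G -> derives H g) -> derives H a.
Proof.
  intros d HG. induction d as [a Ha | a Ha | a b _ IH1 _ IH2].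
  - exact (HG a Ha).
  - exact (derives_prov Ha).
  - exact (derives_mp IH1 IH2).
Qed.

Lemma derives_weaken G H a : derives G a -> incl G H -> derives H a.
Proof.
  intros d HGH. apply (derives_subst _ _ _ d).
  intros g Hg; exact (derives_hyp (HGH g Hg)).
Qed.

Lemma derives_nil_prov a : derives [] a -> prov a.
Proof. induction 1 as [a [] | a Ha | a b _ IH1 _ IH2]; [exact Ha | exact (r_mp _ _ IH1 IH2)]. Qed.

Lemma derives_or_elim G a b c :
  derives G (Or a b) -> derives (a :: G) c -> derives (b :: G) c -> derives G c.
Proof.
  intros dab da db.
  exact (derives_mp (derives_mp (derives_mp (derives_prov (ax_ore a b c))
           (derives_deduction _ _ _ da)) (derives_deduction _ _ _ db)) dab).
Qed.

Lemma derives_conjl G L : incl L G -> derives G (conjl L).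
Proof.
  induction L as [| a L IH]; intros HL; simpl.
  - exact (derives_prov (prov_imp_refl Bot)).
  - apply incl_cons_inv in HL as [Ha HL].
    exact (derives_mp (derives_mp (derives_prov (ax_andi _ _)) (derives_hyp Ha)) (IH HL)).
Qed.

Lemma derives_of_conjl G g : In g G -> derives [conjl G] g.
Proof.
  induction G as [| a G IH]; intros Hg; [destruct Hg |]; destruct Hg as [<- | Hg]; simpl.
  - exact (derives_mp (derives_prov (ax_andl _ _)) (derives_hyp (in_eq _ _))).
  - apply (derives_subst _ _ _ (IH Hg)). intros h [<- | []].
    exact (derives_mp (derives_prov (ax_andr _ _)) (derives_hyp (in_eq _ _))).
Qed.

Lemma prov_conjl_imp G a : prov (Imp (conjl G) a) <-> derives G a.
Proof.
  split; intros H.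
  - exact (derives_mp (derives_prov H) (derives_conjl G G (incl_refl G))).
  - apply derives_nil_prov, derives_deduction.
    apply (derives_subst _ _ _ H). intros g Hg.
    apply (derives_weaken _ _ _ (derives_of_conjl G g Hg)). intros h [<- | []]; left; reflexivity.
Qed.

Lemma derives_disjl G D y : In y D -> derives G y -> derives G (disjl D).
Proof.
  induction D as [| b D IH]; intros Hy d; [destruct Hy |]; destruct Hy as [<- | Hy]; simpl.
  - exact (derives_mp (derives_prov (ax_orl _ _)) d).
  - exact (derives_mp (derives_prov (ax_orr _ _)) (IH Hy d)).
Qed.

Lemma derives_disjl_elim G D c :
  derives G (disjl D) -> (forall y, In y D -> derives (y :: G) c) -> derives G c.
Proof.
  revert G. induction D as [| b D IH]; intros G d Hc; simpl in d.
  - exact (derives_mp (derives_prov (ax_efq c)) d).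
  - apply (derives_or_elim _ _ _ _ d); [apply Hc; left; reflexivity |].
    apply (IH _ (derives_hyp (in_eq _ _))). intros y Hy.
    apply (derives_weaken _ _ _ (Hc y (or_intror Hy))).
    intros h [<- | Hh]; [left | right; right]; auto.
Qed.

Lemma derives_disjl_incl G D D' : derives G (disjl D) -> incl D D' -> derives G (disjl D').
Proof.
  intros d HD. apply (derives_disjl_elim _ _ _ d). intros y Hy.
  exact (derives_disjl _ _ _ (HD y Hy) (derives_hyp (in_eq _ _))).
Qed.

Lemma entails_iff G D :
  entails G D <-> exists G' D', (forall a, In a G' -> G a) /\ (forall a, In a D' -> D a) /\
                                derives G' (disjl D').
Proof.
  split; intros (G' & D' & HG & HD & d); exists G', D'; repeat split; auto;
    apply prov_conjl_imp; exact d.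
Qed.

Lemma entails_single (G D : fset) (G' : list form) c :
  (forall g, In g G' -> G g) -> D c -> derives G' c -> entails G D.
Proof.
  intros HG Hc d. apply entails_iff. exists G', [c]. repeat split; auto.
  - intros a [<- | []]; exact Hc.
  - exact (derives_disjl _ _ _ (in_eq _ _) d).
Qed.

Definition add_form (X : fset) (x : form) : fset := fun y => X y \/ y = x.

Definition form_eq_dec (x y : form) : {x = y} + {x <> y}.
Proof. decide equality; apply Nat.eq_dec. Defined.

Lemma incl_cons_remove x l : incl l (x :: remove form_eq_dec x l).
Proof.
  intros y Hy. destruct (form_eq_dec x y) as [<- | Hne].
  - left; reflexivity.
  - right; apply in_in_remove; auto.
Qed.

Lemma in_remove_add (X : fset) x l y : (forall a, In a l -> add_form X x a) ->
  In y (remove form_eq_dec x l) -> X y.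
Proof. intros Hl [Hy Hne]%in_remove. destruct (Hl y Hy); [assumption | contradiction]. Qed.

Lemma entails_cut G D x : entails G (add_form D x) -> entails (add_form G x) D -> entails G D.
Proof.
  rewrite !entails_iff. intros (G1 & D1 & HG1 & HD1 & d1) (G2 & D2 & HG2 & HD2 & d2).
  set (R := remove form_eq_dec x D1).
  exists (G1 ++ remove form_eq_dec x G2), (R ++ D2). split; [| split].
  - intros a [Ha | Ha]%in_app_or; [exact (HG1 a Ha) | exact (in_remove_add _ _ _ _ HG2 Ha)].
  - intros a [Ha | Ha]%in_app_or; [exact (in_remove_add _ _ _ _ HD1 Ha) | exact (HD2 a Ha)].
  - apply (derives_or_elim _ x (disjl R)).
    + apply (derives_weaken G1); [| apply incl_appl, incl_refl].
      exact (derives_disjl_incl _ _ _ d1 (incl_cons_remove x D1)).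
    + apply (derives_disjl_incl _ D2); [| apply incl_appr, incl_refl].
      apply (derives_weaken _ _ _ d2), (incl_tran (incl_cons_remove x G2)).
      exact (incl_cons (in_eq _ _) (incl_tl _ (incl_appr _ (incl_refl _)))).
    + exact (derives_disjl_incl _ _ _ (derives_hyp (in_eq _ _)) (incl_appl _ (incl_refl R))).
Qed.

Fixpoint form_code (f : form) : nat :=
  match f with
  | Bot => to_nat (0, 0)
  | Var n => to_nat (1, n)
  | And a b => to_nat (2, to_nat (form_code a, form_code b))
  | Or a b => to_nat (3, to_nat (form_code a, form_code b))
  | Imp a b => to_nat (4, to_nat (form_code a, form_code b))
  | Next a => to_nat (5, form_code a)
  | Dia a => to_nat (6, form_code a)
  | All a => to_nat (7, form_code a)
  end.

Lemma to_nat_inj a b c d : to_nat (a, b) = to_nat (c, d) -> a = c /\ b = d.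
Proof.
  intros H. apply (f_equal of_nat) in H. rewrite !cancel_of_to in H.
  injection H as -> ->; split; reflexivity.
Qed.

Lemma form_code_inj f g : form_code f = form_code g -> f = g.
Proof.
  revert g; induction f; destruct g; cbn [form_code]; intros H; try reflexivity;
    apply to_nat_inj in H as [H1 H2]; try discriminate;
    try (apply to_nat_inj in H2 as [H2 H3]); f_equal; auto.
Qed.

Definition form_of_code (n : nat) : form :=
  match excluded_middle_informative (exists f, form_code f = n) with
  | left H => proj1_sig (constructive_indefinite_description _ H)
  | right _ => Bot
  end.

Lemma form_of_code_code f : form_of_code (form_code f) = f.
Proof.
  unfold form_of_code. destruct excluded_middle_informative as [H | H].
  - destruct constructive_indefinite_description as [g Hg]. exact (form_code_inj _ _ Hg).
  - exfalso; exact (H (ex_intro _ f eq_refl)).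
Qed.

Definition ftype_incl (P Q : ftype) : Prop :=
  (forall x, fst P x -> fst Q x) /\ (forall x, snd P x -> snd Q x).

Definition consistent (P : ftype) : Prop := ~ entails (fst P) (snd P).

Definition extend (P : ftype) (x : form) : ftype :=
  if excluded_middle_informative (entails (add_form (fst P) x) (snd P))
  then (fst P, add_form (snd P) x) else (add_form (fst P) x, snd P).

Lemma extend_incl P x : ftype_incl P (extend P x).
Proof. unfold extend; destruct excluded_middle_informative; split; cbn; unfold add_form; auto. Qed.

Lemma extend_decides P x : fst (extend P x) x \/ snd (extend P x) x.
Proof. unfold extend; destruct excluded_middle_informative; cbn; unfold add_form; auto. Qed.

Lemma extend_consistent P x : consistent P -> consistent (extend P x).
Proof.
  unfold consistent, extend; intros HP; destruct excluded_middle_informative as [H | H]; cbn.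
  - intros H'; exact (HP (entails_cut _ _ _ H' H)).
  - exact H.
Qed.

Fixpoint saturate (P : ftype) (n : nat) : ftype :=
  match n with
  | 0 => P
  | S n => extend (saturate P n) (form_of_code n)
  end.

Lemma saturate_incl P n m : n <= m -> ftype_incl (saturate P n) (saturate P m).
Proof.
  induction 1 as [| m _ [IH1 IH2]]; [split; auto |].
  destruct (extend_incl (saturate P m) (form_of_code m)) as [E1 E2]. split; auto.
Qed.

Lemma saturate_consistent P n : consistent P -> consistent (saturate P n).
Proof. intros HP; induction n; [exact HP | apply extend_consistent, IHn]. Qed.

Definition saturation (P : ftype) : ftype :=
  (fun x => exists n, fst (saturate P n) x, fun x => exists n, snd (saturate P n) x).

Lemma finite_stage (F : nat -> fset) (l : list form) :
  (forall n m x, n <= m -> F n x -> F m x) ->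
  (forall x, In x l -> exists n, F n x) -> exists N, forall x, In x l -> F N x.
Proof.
  intros mono. induction l as [| a l IH]; intros Hl; [exists 0; intros x [] |].
  destruct (Hl a (in_eq _ _)) as [n Hn], IH as [N HN];
    [intros x Hx; exact (Hl x (in_cons _ _ _ Hx)) |].
  exists (Nat.max n N). intros x [<- | Hx].
  - exact (mono n _ a (Nat.le_max_l _ _) Hn).
  - exact (mono N _ x (Nat.le_max_r _ _) (HN x Hx)).
Qed.

Lemma lindenbaum P : consistent P -> exists Q, prime_type Q /\ ftype_incl P Q.
Proof.
  intros HP. exists (saturation P). split; [split | split; intros x Hx; exists 0; exact Hx].
  - intros x. destruct (extend_decides (saturate P (form_code x)) x) as [H | H]; [left | right];
      exists (S (form_code x)); cbn [saturate]; rewrite form_of_code_code; exact H.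
  - intros (G' & D' & HG & HD & d).
    destruct (finite_stage (fun n => fst (saturate P n)) G') as [N1 H1];
      [intros n m x Hnm; apply (saturate_incl P n m Hnm) | exact HG |].
    destruct (finite_stage (fun n => snd (saturate P n)) D') as [N2 H2];
      [intros n m x Hnm; apply (saturate_incl P n m Hnm) | exact HD |].
    apply (saturate_consistent P (Nat.max N1 N2) HP). exists G', D'. repeat split; [| | exact d].
    + intros x Hx. exact (proj1 (saturate_incl P _ _ (Nat.le_max_l N1 N2)) x (H1 x Hx)).
    + intros x Hx. exact (proj2 (saturate_incl P _ _ (Nat.le_max_r N1 N2)) x (H2 x Hx)).
Qed.

Lemma prime_type_derives Q G c :
  prime_type Q -> (forall g, In g G -> fst Q g) -> derives G c -> fst Q c.
Proof.
  intros [Htot Hcons] HG d. destruct (Htot c) as [Hc | Hc]; [exact Hc |].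
  exfalso; exact (Hcons (entails_single _ _ G c HG Hc d)).
Qed.

Lemma prime_type_not_both Q c : prime_type Q -> fst Q c -> snd Q c -> False.
Proof.
  intros [_ Hcons] H1 H2. apply Hcons, (entails_single _ _ [c] c).
  - intros g [<- | []]; exact H1.
  - exact H2.
  - exact (derives_hyp (in_eq _ _)).
Qed.

Lemma prime_type_not_bot Q : prime_type Q -> ~ fst Q Bot.
Proof.
  intros [_ Hcons] H. apply Hcons, entails_iff. exists [Bot], []. repeat split.
  - intros g [<- | []]; exact H.
  - intros a [].
  - exact (derives_hyp (in_eq _ _)).
Qed.

Lemma prime_type_or Q a b : prime_type Q -> fst Q (Or a b) -> fst Q a \/ fst Q b.
Proof.
  intros [Htot Hcons] Hab. destruct (Htot a) as [Ha | Ha]; [left; exact Ha |].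
  destruct (Htot b) as [Hb | Hb]; [right; exact Hb |]. exfalso.
  apply Hcons, entails_iff. exists [Or a b], [a; b]. repeat split.
  - intros g [<- | []]; exact Hab.
  - intros g [<- | [<- | []]]; assumption.
  - apply (derives_or_elim _ a b _ (derives_hyp (in_eq _ _))).
    + exact (derives_disjl _ _ a (in_eq _ _) (derives_hyp (in_eq _ _))).
    + exact (derives_disjl _ _ b (in_cons _ _ _ (in_eq _ _)) (derives_hyp (in_eq _ _))).
Qed.

Lemma prime_type_snd_all Q b : prime_type Q -> snd Q (All b) <-> fst Q (Neg (All b)).
Proof.
  intros HQ. split; intros H.
  - assert (Hem : fst Q (Or (All b) (Neg (All b)))).
    { apply (prime_type_derives Q [] _ HQ); [intros g [] | exact (derives_prov (ax_allem b))]. }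
    destruct (prime_type_or Q _ _ HQ Hem) as [Hb | Hn]; [| exact Hn].
    exfalso; exact (prime_type_not_both Q _ HQ Hb H).
  - destruct (proj1 HQ (All b)) as [Hb | Hb]; [exfalso | exact Hb].
    apply (prime_type_not_bot Q HQ), (prime_type_derives Q [All b; Neg (All b)] Bot HQ).
    { intros g [<- | [<- | []]]; assumption. }
    exact (derives_mp (derives_hyp (in_cons _ _ _ (in_eq _ _))) (derives_hyp (in_eq _ _))).
Qed.

Lemma derives_all_and G a b : derives G (All a) -> derives G (All b) -> derives G (All (And a b)).
Proof.
  intros da db.
  refine (derives_mp (derives_mp (derives_prov (ax_allk b (And a b))) _) db).
  exact (derives_mp (derives_mp (derives_prov (ax_allk a (Imp b (And a b))))
                                (derives_prov (r_allnec _ (ax_andi a b)))) da).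
Qed.

Lemma derives_all_conjl G L :
  (forall g, In g L -> derives G (All g)) -> derives G (All (conjl L)).
Proof.
  induction L as [| a L IH]; intros HL; simpl.
  - exact (derives_prov (r_allnec _ (prov_imp_refl Bot))).
  - exact (derives_all_and _ _ _ (HL a (in_eq _ _)) (IH (fun g Hg => HL g (in_cons _ _ _ Hg)))).
Qed.

Lemma derives_all_intro G x :
  (forall g, In g G -> prov (Imp g (All g))) -> derives G x -> derives G (All x).
Proof.
  intros Hbox d. apply prov_conjl_imp in d.
  apply (derives_mp (derives_prov (r_mp _ _ (ax_allk _ _) (r_allnec _ d)))).
  apply derives_all_conjl. intros g Hg.
  exact (derives_mp (derives_prov (Hbox g Hg)) (derives_hyp Hg)).
Qed.

Lemma prov_neg_all_all b : prov (Imp (Neg (All b)) (All (Neg (All b)))).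
Proof.
  (* Apply [ax_allor] to the necessitation of [Or (Neg (All b)) (All b)]. *)
  assert (Hem : prov (Or (Neg (All b)) (All b))).
  { apply derives_nil_prov, (derives_or_elim _ _ _ _ (derives_prov (ax_allem b))).
    - exact (derives_mp (derives_prov (ax_orr _ _)) (derives_hyp (in_eq _ _))).
    - exact (derives_mp (derives_prov (ax_orl _ _)) (derives_hyp (in_eq _ _))). }
  apply derives_nil_prov, derives_deduction.
  apply (derives_or_elim _ _ _ _ (derives_prov (r_mp _ _ (ax_allor _ b) (r_allnec _ Hem)))).
  - exact (derives_hyp (in_eq _ _)).
  - apply (derives_mp (derives_prov (ax_efq _))).
    exact (derives_mp (derives_hyp (in_cons _ _ _ (in_eq _ _))) (derives_hyp (in_eq _ _))).
Qed.

Section Profile.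

Variables (Sigma : list form) (Pi : ftype).
Hypothesis Hprofile : universal_profile Sigma Pi.

Lemma profile_universal c : fst Pi c \/ snd Pi c -> exists b, c = All b.
Proof. intros Hc. apply (proj1 Hprofile) in Hc as [_ Hb]. exact Hb. Qed.

Lemma profile_covers a : In (All a) Sigma -> fst Pi (All a) \/ snd Pi (All a).
Proof. intros Ha. apply (proj1 Hprofile). split; [exact Ha | exists a; reflexivity]. Qed.

Definition profile_theory : fset :=
  fun x => fst Pi x \/ exists c, snd Pi c /\ x = Neg c.

Lemma profile_theory_boxed g : profile_theory g -> prov (Imp g (All g)).
Proof.
  intros [Hg | [c [Hc ->]]].
  - destruct (profile_universal g (or_introl Hg)) as [b ->]. exact (ax_all4 b).
  - destruct (profile_universal c (or_intror Hc)) as [b ->]. exact (prov_neg_all_all b).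
Qed.

Lemma Wc_Pi_iff_profile_theory Q :
  prime_type Q -> Wc_Pi Pi Q <-> (forall x, profile_theory x -> fst Q x).
Proof.
  intros HQ. split.
  - intros [_ [Hpos Hneg]] x [Hx | [c [Hc ->]]]; [exact (Hpos x Hx) |].
    destruct (profile_universal c (or_intror Hc)) as [b ->].
    exact (proj1 (prime_type_snd_all Q b HQ) (Hneg _ Hc)).
  - intros H. split; [exact HQ | split].
    + intros x Hx; exact (H x (or_introl Hx)).
    + intros c Hc. destruct (profile_universal c (or_intror Hc)) as [b ->].
      apply (prime_type_snd_all Q b HQ), H. right; exists (All b); split; [exact Hc | reflexivity].
Qed.

Lemma Wc_Pi_upward P Q : Wc_Pi Pi P -> Wc Q -> prec_c P Q -> Wc_Pi Pi Q.
Proof.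
  intros HP HQ [Hpos _]. apply (Wc_Pi_iff_profile_theory Q HQ). intros x Hx.
  exact (Hpos x (proj1 (Wc_Pi_iff_profile_theory P (proj1 HP)) HP x Hx)).
Qed.

Lemma Wc_Pi_honest_fst P Q a :
  In (All a) Sigma -> Wc_Pi Pi P -> fst P (All a) -> Wc_Pi Pi Q -> fst Q a.
Proof.
  intros Ha [HP [_ HPneg]] Hall [HQ [HQpos _]].
  destruct (profile_covers a Ha) as [Hpos | Hneg].
  - apply (prime_type_derives Q [All a] a HQ); [intros g [<- | []]; exact (HQpos _ Hpos) |].
    exact (derives_mp (derives_prov (ax_allt a)) (derives_hyp (in_eq _ _))).
  - exfalso; exact (prime_type_not_both P _ HP Hall (HPneg _ Hneg)).
Qed.

Lemma Wc_Pi_honest_snd P a : Wc_Pi Pi P -> snd P (All a) -> exists Q, Wc_Pi Pi Q /\ snd Q a.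
Proof.
  intros HP Hall.
  assert (Hcons : consistent (profile_theory, fun x => x = a)).
  { intros (G & D & HG & HD & d)%entails_iff. cbn in HG, HD.
    assert (da : derives G a).
    { apply (derives_disjl_elim _ _ _ d). intros y Hy.
      rewrite (HD y Hy). exact (derives_hyp (in_eq _ _)). }
    apply (prime_type_not_both P (All a) (proj1 HP)); [| exact Hall].
    apply (prime_type_derives P G _ (proj1 HP)).
    - intros g Hg. exact (proj1 (Wc_Pi_iff_profile_theory P (proj1 HP)) HP g (HG g Hg)).
    - exact (derives_all_intro G a (fun g Hg => profile_theory_boxed g (HG g Hg)) da). }
  destruct (lindenbaum _ Hcons) as (Q & HQ & Hpos & Hneg).
  exists Q. split; [exact (proj2 (Wc_Pi_iff_profile_theory Q HQ) Hpos) | exact (Hneg a eq_refl)].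
Qed.

End Profile.

Theorem lemma9p3 (Sigma : list form) (Pi : ftype) :
  subformula_closed Sigma ->
  universal_profile Sigma Pi ->
  (* upward closure *)
  (forall P Q : ftype, Wc_Pi Pi P -> Wc Q -> prec_c P Q -> Wc_Pi Pi Q) /\
  (* honesty *)
  (forall P : ftype, Wc_Pi Pi P ->
     forall a : form, In (All a) Sigma ->
       (fst P (All a) -> forall Q : ftype, Wc_Pi Pi Q -> fst Q a) /\
       (snd P (All a) -> exists Q : ftype, Wc_Pi Pi Q /\ snd Q a)).
Proof.
  intros _ Hprofile. split.
  - exact (Wc_Pi_upward Sigma Pi Hprofile).
  - intros P HP a Ha. split.
    + intros Hall Q HQ. exact (Wc_Pi_honest_fst Sigma Pi Hprofile P Q a Ha HP Hall HQ).
    + exact (Wc_Pi_honest_snd Sigma Pi Hprofile P a HP).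
Qed.
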